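(* Let $1\le k\le n-2$ and let $\Sigma=\mathbb{S}^k\times\mathbb{R}^{n-k}\subset\mathbb{R}^{n+1}$ be a self-shrinker. Let $P_1,P_2\subset\mathbb{R}^{n-k}$ be two orthogonal $(n-k-1)$-dimensional linear subspaces, which divide $\mathbb{R}^{n-k}$ into four open quarter-spaces $Q_1,\dots,Q_4$. Then each $\mathbb{S}^k\times Q_i\subset\Sigma$ is stable.
   Context: $\mathbb{S}^k$ is the round sphere of radius $\sqrt{2k}$ centered at the origin of $\mathbb{R}^{k+1}$. Stability operator: $Lf=\Delta f-\tfrac12\langle\vec x,\nabla f\rangle+(|A|^2+\tfrac12)f$. A region $\Omega$ is stable if there is a function $u$ with $Lu=0$ and $u>0$ on $\Omega$. *)

From Stdlib Require Import Reals Lra.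
Open Scope R_scope.

(* Points of R^{n+1}: coordinates 0..n of a function nat -> R.
   Coordinates 0..k  : the sphere factor R^{k+1} (S^k of radius sqrt(2k)).
   Coordinates k+1..n: the Euclidean factor R^{n-k}. *)
Definition pt := nat -> R.

Definition sph_sq (k : nat) (x : pt) : R := sum_f_R0 (fun i => x i ^ 2) k.

Definition euc_dot (n k : nat) (x y : pt) : R := sum_f (S k) n (fun i => x i * y i).

Definition in_Sigma (n k : nat) (x : pt) : Prop :=
  sph_sq k x = 2 * INR k /\ (forall i, (n < i)%nat -> x i = 0).

Definition sgn (b : bool) : R := if b then 1 else -1.

(* The four open quarter-spaces cut out by the hyperplanes v1^perp, v2^perp
   of R^{n-k}: sign choices (b1,b2). *)
Definition quarter (n k : nat) (v1 v2 : pt) (b1 b2 : bool) (y : pt) : Prop :=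
  0 < sgn b1 * euc_dot n k y v1 /\ 0 < sgn b2 * euc_dot n k y v2.

Definition Omega (n k : nat) (v1 v2 : pt) (b1 b2 : bool) (x : pt) : Prop :=
  in_Sigma n k x /\ quarter n k v1 v2 b1 b2 x.

(* nearest-point projection onto Sigma (radial in the sphere factor) *)
Definition proj (k : nat) (x : pt) : pt :=
  fun i => if (i <=? k)%nat then sqrt (2 * INR k) * x i / sqrt (sph_sq k x) else x i.

(* unit normal field of Sigma (extended, constant along normal lines) *)
Definition nu (k : nat) (x : pt) : pt :=
  fun i => if (i <=? k)%nat then x i / sqrt (sph_sq k x) else 0.

Definition shift (x : pt) (i : nat) (t : R) : pt :=
  fun j => if Nat.eqb j i then x j + t else x j.

Definition partial (F : pt -> R) (i : nat) (x : pt) (l : R) : Prop :=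
  derivable_pt_lim (fun t => F (shift x i t)) 0 l.

(* |A|^2 at p = |D nu (p)|^2 (Frobenius norm of the derivative of the
   unit normal field, i.e. of the shape operator) *)
Definition secff_sq (n k : nat) (p : pt) (a : R) : Prop :=
  exists D : nat -> nat -> R,
    (forall i j, (i <= n)%nat -> (j <= n)%nat ->
       partial (fun x => nu k x j) i p (D i j)) /\
    a = sum_f_R0 (fun i => sum_f_R0 (fun j => D i j ^ 2) n) n.

Definition cont_at (n : nat) (F : pt -> R) (x : pt) : Prop :=
  forall eps, 0 < eps -> exists delta, 0 < delta /\
    forall y, (forall m, (m <= n)%nat -> Rabs (y m - x m) < delta) ->
              (forall m, (n < m)%nat -> y m = x m) ->
              Rabs (F y - F x) < eps.

Definition C2_on (n : nat) (W : pt -> Prop) (U : pt -> R)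
    (G : nat -> pt -> R) (H : nat -> nat -> pt -> R) : Prop :=
  forall x, W x -> forall i j, (i <= n)%nat -> (j <= n)%nat ->
    partial U i x (G i x) /\ partial (G i) j x (H i j x) /\ cont_at n (H i j) x.

(* A region Om of Sigma is stable: there is a (C^2) function u with
   L u = 0 and u > 0 on Om, where
   L u = Delta_Sigma u - 1/2 <x, grad u> + (|A|^2 + 1/2) u.
   Delta_Sigma u and grad_Sigma u at p in Sigma are computed as the ambient
   Laplacian/gradient of the normal-constant extension U = u o proj. *)
Definition stable (n k : nat) (Om : pt -> Prop) : Prop :=
  exists (u : pt -> R) (G : nat -> pt -> R) (H : nat -> nat -> pt -> R),
    C2_on n (fun x => 0 < sph_sq k x /\ Om (proj k x)) (fun x => u (proj k x)) G H /\
    forall p, Om p ->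
      0 < u p /\
      exists a, secff_sq n k p a /\
        sum_f_R0 (fun i => H i i p) n
        - / 2 * sum_f_R0 (fun i => p i * G i p) n
        + (a + / 2) * u p = 0.

From Stdlib Require Import Reals Lra Lia.
From Coquelicot Require Import Coquelicot.
Open Scope R_scope.

(* Take u(x) = s1 s2 <x,v1> <x,v2>, where s1, s2 are the signs fixing the
   quarter, so that u > 0 on it.  The Hessian of u is constant with trace
   2 s1 s2 <v1,v2> = 0, and u is homogeneous of degree 2, so <x, grad u> = 2u.
   The unit normal of S^k x R^(n-k) is radial in the sphere factor, whence
   |A|^2 = k / |x_S|^2 = 1/2 on Sigma, and Lu = 0 - u + (1/2 + 1/2) u = 0. *)

Lemma sum_f_R0_single (f : nat -> R) (i N : nat) :
  sum_f_R0 (fun j => if (j =? i)%nat then f j else 0) N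
  = if (i <=? N)%nat then f i else 0.
Proof.
induction N as [|N IH].
- destruct i; reflexivity.
- cbn [sum_f_R0]; rewrite IH.
  destruct (Nat.leb_spec i N), (Nat.leb_spec i (S N)), (Nat.eqb_spec (S N) i);
    subst; try lia; ring.
Qed.

Lemma sum_f_R0_restrict (f : nat -> R) (k n : nat) : (k <= n)%nat ->
  sum_f_R0 (fun i => if (i <=? k)%nat then f i else 0) n = sum_f_R0 f k.
Proof.
intros Hkn; destruct (Nat.eq_dec k n) as [->|Hne].
- apply sum_eq; intros i Hi; destruct (Nat.leb_spec i n); [reflexivity | lia].
- rewrite (tech2 _ k n) by lia.
  rewrite sum_eq_R0 with (N := (n - S k)%nat), Rplus_0_r.
  + apply sum_eq; intros i Hi; destruct (Nat.leb_spec i k); [reflexivity | lia].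
  + intros m _; destruct (Nat.leb_spec (S k + m) k); [lia | reflexivity].
Qed.

Lemma sum_f_as_sum_f_R0 (f : nat -> R) (k n : nat) : (k < n)%nat ->
  sum_f (S k) n f = sum_f_R0 (fun i => if (S k <=? i)%nat then f i else 0) n.
Proof.
intros Hkn; rewrite (tech2 _ k n Hkn).
rewrite sum_eq_R0, Rplus_0_l.
- apply sum_eq; intros i Hi.
  destruct (Nat.leb_spec (S k) (S k + i)); [|lia].
  unfold sum_f; f_equal; lia.
- intros m Hm; destruct (Nat.leb_spec (S k) m); [lia | reflexivity].
Qed.

Definition euc_part (k : nat) (v : pt) (i : nat) : R :=
  if (S k <=? i)%nat then v i else 0.

Section EuclideanFactor.

Variables n k : nat.
Hypothesis k_lt_n : (k < n)%nat.

Lemma sum_mul_euc_part (f g : pt) :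
  sum_f_R0 (fun i => f i * euc_part k g i) n = euc_dot n k f g.
Proof.
unfold euc_dot; rewrite sum_f_as_sum_f_R0 by exact k_lt_n.
apply sum_eq; intros i _; unfold euc_part.
destruct (Nat.leb_spec (S k) i); ring.
Qed.

Lemma euc_dot_shift (x v : pt) (i : nat) (t : R) : (i <= n)%nat ->
  euc_dot n k (shift x i t) v = euc_dot n k x v + t * euc_part k v i.
Proof.
intros Hi; unfold euc_dot; rewrite !sum_f_as_sum_f_R0 by exact k_lt_n.
rewrite (sum_eq _ (fun j => (if (S k <=? j)%nat then x j * v j else 0)
                          + (if (j =? i)%nat then t * euc_part k v j else 0))).
- rewrite sum_plus, sum_f_R0_single.
  destruct (Nat.leb_spec i n); [reflexivity | lia].
- intros j _; unfold shift, euc_part.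
  destruct (Nat.eqb_spec j i), (Nat.leb_spec (S k) j); ring.
Qed.

Lemma euc_dot_proj (x v : pt) : euc_dot n k (proj k x) v = euc_dot n k x v.
Proof.
unfold euc_dot; rewrite !sum_f_as_sum_f_R0 by exact k_lt_n.
apply sum_eq; intros j _; unfold proj.
destruct (Nat.leb_spec (S k) j); [|reflexivity].
destruct (Nat.leb_spec j k); [lia | reflexivity].
Qed.

End EuclideanFactor.

Lemma sph_sq_shift (k : nat) (x : pt) (i : nat) (t : R) :
  sph_sq k (shift x i t)
  = sph_sq k x + (if (i <=? k)%nat then 2 * t * x i + t ^ 2 else 0).
Proof.
unfold sph_sq.
rewrite (sum_eq _ (fun j => x j ^ 2 + (if (j =? i)%nat then 2 * t * x j + t ^ 2 else 0))).
- rewrite sum_plus, sum_f_R0_single; reflexivity.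
- intros j _; unfold shift; destruct (Nat.eqb_spec j i); ring.
Qed.

(* Derivative of x_S / |x_S|: (delta_ij / r - p_i p_j / r^3) on the sphere block. *)
Definition dnu (k : nat) (p : pt) (i j : nat) : R :=
  if andb (i <=? k)%nat (j <=? k)%nat then
    (if (i =? j)%nat then / sqrt (sph_sq k p) else 0)
    - p i * p j / sqrt (sph_sq k p) ^ 3
  else 0.

Lemma nu_partial (k : nat) (p : pt) (i j : nat) : 0 < sph_sq k p ->
  partial (fun x => nu k x j) i p (dnu k p i j).
Proof.
intros Hpos; unfold partial; apply is_derive_Reals.
set (r2 := sph_sq k p) in *.
assert (Hr : 0 < sqrt r2) by now apply sqrt_lt_R0.
unfold nu, dnu; destruct (Nat.leb_spec j k) as [Hj|Hj].
2: { rewrite Bool.andb_false_r; auto_derive; auto. }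
rewrite Bool.andb_true_r; destruct (Nat.leb_spec i k) as [Hi|Hi].
- eapply is_derive_ext.
  { intro t; symmetry; rewrite sph_sq_shift; fold r2.
    destruct (Nat.leb_spec i k); [reflexivity | lia]. }
  unfold shift; destruct (Nat.eqb_spec j i) as [->|Hne].
  + rewrite Nat.eqb_refl.
    auto_derive; replace (r2 + (2 * 0 * p i + 0 * (0 * 1))) with r2 by ring; fold r2;
      [repeat split; lra | field; lra].
  + destruct (Nat.eqb_spec i j); [lia|].
    auto_derive; replace (r2 + (2 * 0 * p i + 0 * (0 * 1))) with r2 by ring; fold r2;
      [repeat split; lra | field; lra].
- eapply is_derive_ext.
  { intro t; symmetry; rewrite sph_sq_shift; fold r2.
    destruct (Nat.leb_spec i k); [lia|].
    unfold shift; destruct (Nat.eqb_spec j i); [lia | reflexivity]. }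
  auto_derive; auto.
Qed.

Lemma sum_dnu_sq (n k : nat) (p : pt) : (k <= n)%nat -> 0 < sph_sq k p ->
  sum_f_R0 (fun i => sum_f_R0 (fun j => dnu k p i j ^ 2) n) n = INR k / sph_sq k p.
Proof.
intros Hkn Hpos.
set (r := sqrt (sph_sq k p)).
assert (Hr : 0 < r) by now apply sqrt_lt_R0.
assert (Hrr : r * r = sph_sq k p) by (apply sqrt_sqrt; lra).
assert (row_sum : forall i, (i <= k)%nat ->
          sum_f_R0 (fun j => dnu k p i j ^ 2) n = / r ^ 2 - p i ^ 2 / r ^ 4).
{ intros i Hik; unfold dnu; destruct (Nat.leb_spec i k); [|lia].
  rewrite (sum_eq _ (fun j => if (j <=? k)%nat then
      (if (j =? i)%nat then / r ^ 2 - 2 * p i * p j / r ^ 4 else 0)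
      + p j ^ 2 * (p i ^ 2 / r ^ 6) else 0)).
  - rewrite sum_f_R0_restrict, sum_plus, sum_f_R0_single, <- scal_sum by exact Hkn.
    destruct (Nat.leb_spec i k); [|lia].
    fold (sph_sq k p); rewrite <- Hrr; field; lra.
  - intros j _; destruct (Nat.leb_spec j k); cbn [andb]; [|ring].
    rewrite Nat.eqb_sym; destruct (Nat.eqb_spec j i) as [->|]; fold r; field; lra. }
rewrite (sum_eq _ (fun i => if (i <=? k)%nat then / r ^ 2 - p i ^ 2 / r ^ 4 else 0)).
- rewrite sum_f_R0_restrict by exact Hkn.
  rewrite (sum_eq _ (fun i => / r ^ 2 + p i ^ 2 * (- / r ^ 4))) by (intros; field; lra).
  rewrite sum_plus, <- scal_sum, sum_cte, S_INR.
  fold (sph_sq k p); rewrite <- Hrr; field; lra.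
- intros i _; destruct (Nat.leb_spec i k) as [Hik|Hik].
  + now apply row_sum.
  + apply sum_eq_R0; intros j _; unfold dnu.
    destruct (Nat.leb_spec i k); [lia | cbn [andb]; ring].
Qed.

Lemma secff_sq_in_Sigma (n k : nat) (p : pt) :
  (1 <= k)%nat -> (k <= n)%nat -> in_Sigma n k p -> secff_sq n k p (/ 2).
Proof.
intros Hk Hkn [Hsph _].
assert (Hk0 : 0 < INR k) by (apply lt_0_INR; lia).
exists (dnu k p); split.
- intros i j _ _; apply nu_partial; lra.
- rewrite sum_dnu_sq, Hsph by (lia || lra); field; lra.
Qed.

(* On Sigma we have |A|^2 + 1/2 = 1, so L reduces to Delta - 1/2 <x, grad> + 1. *)
Lemma stable_of_eigenfunction (n k : nat) (Om : pt -> Prop) (u : pt -> R)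
    (G : nat -> pt -> R) (H : nat -> nat -> pt -> R) :
  (1 <= k)%nat -> (k <= n)%nat ->
  (forall p, Om p -> in_Sigma n k p) ->
  C2_on n (fun x => 0 < sph_sq k x /\ Om (proj k x)) (fun x => u (proj k x)) G H ->
  (forall p, Om p -> 0 < u p /\
     sum_f_R0 (fun i => H i i p) n - / 2 * sum_f_R0 (fun i => p i * G i p) n + u p = 0) ->
  stable n k Om.
Proof.
intros Hk Hkn Hsub HC2 Hu.
exists u, G, H; split; [exact HC2|].
intros p Hp; destruct (Hu p Hp) as [Hpos Heq]; split; [exact Hpos|].
exists (/ 2); split; [now apply secff_sq_in_Sigma, Hsub|].
lra.
Qed.

Section LinearFormProduct.

Variables n k : nat.
Hypothesis k_lt_n : (k < n)%nat.
Variables (c : R) (a b : pt).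

Definition lf_prod (x : pt) : R := c * euc_dot n k x a * euc_dot n k x b.

Definition lf_prod_grad (i : nat) (x : pt) : R :=
  c * (euc_part k a i * euc_dot n k x b + euc_dot n k x a * euc_part k b i).

Definition lf_prod_hess (i j : nat) (_ : pt) : R :=
  c * (euc_part k a i * euc_part k b j + euc_part k a j * euc_part k b i).

Lemma lf_prod_C2 (W : pt -> Prop) :
  C2_on n W (fun x => lf_prod (proj k x)) lf_prod_grad lf_prod_hess.
Proof.
intros x _ i j Hi Hj; split; [|split].
- unfold partial, lf_prod; apply is_derive_Reals.
  apply (is_derive_ext (fun t => c * (euc_dot n k x a + t * euc_part k a i)
                                   * (euc_dot n k x b + t * euc_part k b i))).
  { intro t; rewrite !euc_dot_proj, !euc_dot_shift by assumption; reflexivity. }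
  auto_derive; [exact I | unfold lf_prod_grad; ring].
- unfold partial, lf_prod_grad; apply is_derive_Reals.
  apply (is_derive_ext (fun t => c * (euc_part k a i * (euc_dot n k x b + t * euc_part k b j)
                                   + (euc_dot n k x a + t * euc_part k a j) * euc_part k b i))).
  { intro t; rewrite !euc_dot_shift by assumption; reflexivity. }
  auto_derive; [exact I | unfold lf_prod_hess; ring].
- intros eps Heps; exists 1; split; [lra|]; intros y _ _.
  unfold lf_prod_hess; rewrite Rminus_diag, Rabs_R0; exact Heps.
Qed.

Lemma lf_prod_hess_trace (x : pt) :
  sum_f_R0 (fun i => lf_prod_hess i i x) n = 2 * c * euc_dot n k a b.
Proof.
rewrite (sum_eq _ (fun i => a i * euc_part k b i * (2 * c))).
- rewrite <- scal_sum, sum_mul_euc_part by exact k_lt_n; ring.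
- intros i _; unfold lf_prod_hess, euc_part.
  destruct (Nat.leb_spec (S k) i); ring.
Qed.

Lemma lf_prod_euler (x : pt) :
  sum_f_R0 (fun i => x i * lf_prod_grad i x) n = 2 * lf_prod x.
Proof.
rewrite (sum_eq _ (fun i => x i * euc_part k a i * (c * euc_dot n k x b)
                          + x i * euc_part k b i * (c * euc_dot n k x a)))
  by (intros; unfold lf_prod_grad; ring).
rewrite sum_plus, <- !scal_sum, !sum_mul_euc_part by exact k_lt_n.
unfold lf_prod; ring.
Qed.

End LinearFormProduct.

Theorem proposition4p4 (n k : nat) (v1 v2 : pt) (b1 b2 : bool) :
  (1 <= k)%nat -> (k <= n - 2)%nat ->
  (exists i, (S k <= i <= n)%nat /\ v1 i <> 0) ->
  (exists i, (S k <= i <= n)%nat /\ v2 i <> 0) ->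
  euc_dot n k v1 v2 = 0 ->
  stable n k (Omega n k v1 v2 b1 b2).
Proof.
intros Hk Hkn _ _ Horth.
assert (k_lt_n : (k < n)%nat) by lia.
set (c := sgn b1 * sgn b2).
apply (stable_of_eigenfunction n k _ (lf_prod n k c v1 v2)
         (lf_prod_grad n k c v1 v2) (lf_prod_hess k c v1 v2)); try lia.
- intros p [HS _]; exact HS.
- now apply lf_prod_C2.
- intros p [_ [Hq1 Hq2]]; split.
  + replace (lf_prod n k c v1 v2 p)
      with ((sgn b1 * euc_dot n k p v1) * (sgn b2 * euc_dot n k p v2))
      by (unfold lf_prod, c; ring).
    now apply Rmult_lt_0_compat.
  + rewrite lf_prod_hess_trace, lf_prod_euler, Horth by exact k_lt_n; lra.
Qed.
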